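(* Let $S$ be a round two-sphere in $\mathbb{HP}^1$ and $Q^2_S=\mathbb{P}(\{[S],[Sj]\}^{\perp})\cap Q^4$, where $[S],[Sj]$ are homogeneous representatives of the points of $Q^4$ corresponding to the two conformal structures on $S$. Then the real structure $j$ of $Q^4$ restricts to a real structure $\{j,Q^2_S\}$, and the two-sphere $S$, as a subset of $S^4\subset Q^4$, is exactly the real set of $\{j,Q^2_S\}$, namely the points $[a\wedge aj]$ with $[a]$ on the twistor lift $S\subset\mathbb{CP}^3$.
   Context: $\mathbb{H}^2$ (right $\mathbb{H}$-vector space) is identified with $\mathbb{C}^4$ by restricting scalars to $\mathbb{C}=\mathrm{span}_{\mathbb{R}}\{1,i\}$; right multiplication by $j$ is $\mathbb{C}$-antilinear. $\mathbb{CP}^3=\mathbb{P}(\mathbb{C}^4)$, $\mathbb{HP}^1=\{v\mathbb{H}\}\cong S^4$. $Q^4=\{[\alpha]\in\mathbb{P}(\Lambda^2\mathbb{C}^4):\alpha\wedge\alpha=0\}$, $[v\wedge w]$ corresponding to the projective line through $[v],[w]$; $\perp$ is with respect to $(\alpha,\beta)\mapsto\alpha\wedge\beta\in\Lambda^4\mathbb{C}^4\cong\mathbb{C}$. The antilinear extension of $v\wedge w\mapsto vj\wedge wj$ induces a real structure (antiholomorphic involution) $j$ of $Q^4$ whose fixed points are the twistor fibres $[v\wedge vj]$; $v\mathbb{H}\mapsto[v\wedge vj]$ identifies $S^4$ with this real set. A round two-sphere with conformal structure is $\{l:Tl=l\}$ for some $T\in\mathrm{End}_{\mathbb{H}}(\mathbb{H}^2)$,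 $T^2=-1$; its twistor lift is the line $S=\mathbb{P}\{v:Tv=vi\}\subset\mathbb{CP}^3$, and $Sj$ is the lift with the opposite conformal structure. The real set of a real structure is its fixed point set. *)

From mathcomp Require Import all_boot all_order all_algebra.
Set Implicit Arguments. Unset Strict Implicit. Unset Printing Implicit Defensive.
Import GRing.Theory Num.Theory.
Local Open Scope ring_scope.

(* Conventions:
   H^2 ~ C^4 = 'cV[C]_4 : a quaternion q = z + j w (z,w in C) has C-coordinates
   (z,w); right multiplication by complex scalars is scalar multiplication, and
   right multiplication by j is  (z1,w1,z2,w2) |-> (-conj w1, conj z1, -conj w2, conj z2),
   i.e. Jvec v = Mj *m (conj v). *)

Definition Mj (C : numClosedFieldType) : 'M[C]_4 :=
  \matrix_(i < 4, k < 4)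
    (if (val i == 0%N) && (val k == 1%N) then -1
     else if (val i == 1%N) && (val k == 0%N) then 1
     else if (val i == 2%N) && (val k == 3%N) then -1
     else if (val i == 3%N) && (val k == 2%N) then 1
     else 0).

Definition Jvec (C : numClosedFieldType) (v : 'cV[C]_4) : 'cV[C]_4 :=
  Mj C *m map_mx Num.conj v.

(* The quaternionic line v H = span_C {v, v j} (v <> 0 gives a point of HP^1) *)
Definition inH (C : numClosedFieldType) (v u : 'cV[C]_4) : Prop :=
  exists z w : C, u = z *: v + w *: Jvec v.

(* T l = l for the quaternionic line l = v H *)
Definition fixes_hline (C : numClosedFieldType) (T : 'M[C]_4) (v : 'cV[C]_4) : Prop :=
  forall u, inH v u <-> exists u0, inH v u0 /\ u = T *m u0.

(* Lambda^2 C^4 = 'cV[C]_6 with basis e01,e02,e03,e12,e13,e23 *)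
Definition pr (i : 'I_6) : 'I_4 * 'I_4 :=
  match val i with
  | 0%N => (inord 0, inord 1)
  | 1%N => (inord 0, inord 2)
  | 2%N => (inord 0, inord 3)
  | 3%N => (inord 1, inord 2)
  | 4%N => (inord 1, inord 3)
  | _ => (inord 2, inord 3)
  end.

Definition wedge (C : numClosedFieldType) (v w : 'cV[C]_4) : 'cV[C]_6 :=
  \col_(i < 6) (v (pr i).1 0 * w (pr i).2 0 - v (pr i).2 0 * w (pr i).1 0).

(* alpha /\ beta in Lambda^4 C^4 = C (coefficient of e0/\e1/\e2/\e3) *)
Definition wedge4 (C : numClosedFieldType) (a b : 'cV[C]_6) : C :=
  let c (x : 'cV[C]_6) (k : nat) := x (inord k) 0 in
  c a 0 * c b 5 - c a 1 * c b 4 + c a 2 * c b 3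
  + c a 3 * c b 2 - c a 4 * c b 1 + c a 5 * c b 0.

(* antilinear extension of v/\w |-> vj /\ wj:  (Lambda^2 Mj) applied to conj alpha *)
Definition jL (C : numClosedFieldType) (a : 'cV[C]_6) : 'cV[C]_6 :=
  \col_(i < 6) \sum_(m < 6)
     (Mj C (pr i).1 (pr m).1 * Mj C (pr i).2 (pr m).2
      - Mj C (pr i).1 (pr m).2 * Mj C (pr i).2 (pr m).1) * (a m 0)^*.

Definition proj_eq (C : numClosedFieldType) (n : nat) (a b : 'cV[C]_n) : Prop :=
  exists c : C, c != 0 /\ b = c *: a.

(* [alpha] in Q^2_S = P({[S],[Sj]}^perp) /\ Q^4 *)
Definition inQ2S (C : numClosedFieldType) (A B : 'cV[C]_6) (a : 'cV[C]_6) : Prop :=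
  a != 0 /\ wedge4 a a = 0 /\ wedge4 a A = 0 /\ wedge4 a B = 0.

(* The i-eigenspace of T is the twistor lift S, spanned by a and b, and right
   multiplication by j maps it onto the (-i)-eigenspace Sj, so a, b, aj, bj is a
   basis of C^4.  In the induced basis of Lambda^2 C^4, a point x of Q^2_S is
   orthogonal to a/\b and aj/\bj, hence a combination of the s/\t with s in S and
   t in Sj; the quadric condition says that its 2x2 coefficient matrix has rank
   one, i.e. x = u/\w with u in S and w in Sj, and reality of x forces w to be
   proportional to uj.  Conversely j(u/\uj) = uj/\(-u) = u/\uj.  Finally a
   quaternionic line vH is T-invariant exactly when it contains an i-eigenvector
   u, and then v/\vj is proportional to u/\uj. *)

From mathcomp Require Import all_boot all_order all_algebra ring.
Import GRing.Theory Num.Theory.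
Set Implicit Arguments. Unset Strict Implicit. Unset Printing Implicit Defensive.
Local Open Scope ring_scope.

Lemma mx_addE (R : pzRingType) m n (A B : 'M[R]_(m, n)) i j : (A + B) i j = A i j + B i j.
Proof. by rewrite mxE. Qed.
Lemma mx_oppE (R : pzRingType) m n (A : 'M[R]_(m, n)) i j : (- A) i j = - A i j.
Proof. by rewrite mxE. Qed.
Lemma mx_scaleE (R : pzRingType) m n (x : R) (A : 'M[R]_(m, n)) i j : (x *: A) i j = x * A i j.
Proof. by rewrite mxE. Qed.
Lemma mx_zeroE (R : pzRingType) m n i j : (0 : 'M[R]_(m, n)) i j = 0.
Proof. by rewrite mxE. Qed.

Lemma ord4_inord :
  [/\ lift ord0 (lift ord0 (lift ord0 ord0)) = inord 3 :> 'I_4,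
      lift ord0 (lift ord0 ord0) = inord 2 :> 'I_4,
      lift ord0 ord0 = inord 1 :> 'I_4 & ord0 = inord 0 :> 'I_4].
Proof. by split; apply/val_inj; rewrite /= inordK. Qed.

Lemma ord6_inord :
  [/\ lift ord0 (lift ord0 (lift ord0 (lift ord0 (lift ord0 ord0)))) = inord 5 :> 'I_6,
      lift ord0 (lift ord0 (lift ord0 (lift ord0 ord0))) = inord 4 :> 'I_6,
      lift ord0 (lift ord0 (lift ord0 ord0)) = inord 3 :> 'I_6,
      lift ord0 (lift ord0 ord0) = inord 2 :> 'I_6 &
      lift ord0 ord0 = inord 1 :> 'I_6 /\ ord0 = inord 0 :> 'I_6].
Proof. by do !split; apply/val_inj; rewrite /= inordK. Qed.

Section Coordinates.
Variable C : numClosedFieldType.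
Implicit Types (v w : 'cV[C]_4) (x y : 'cV[C]_6).

Lemma conjCD (s t : C) : (s + t)^* = s^* + t^*.  Proof. exact: rmorphD. Qed.
Lemma conjCB (s t : C) : (s - t)^* = s^* - t^*.  Proof. exact: rmorphB. Qed.
Lemma conjCN (s : C) : (- s)^* = - s^*.  Proof. exact: rmorphN. Qed.
Lemma conjCM (s t : C) : (s * t)^* = s^* * t^*.  Proof. exact: rmorphM. Qed.
Lemma conjCV (s : C) : (s^-1)^* = (s^*)^-1.  Proof. exact: fmorphV. Qed.

Lemma col4P v w :
  v (inord 0) 0 = w (inord 0) 0 -> v (inord 1) 0 = w (inord 1) 0 ->
  v (inord 2) 0 = w (inord 2) 0 -> v (inord 3) 0 = w (inord 3) 0 -> v = w.
Proof.
move=> e0 e1 e2 e3; apply/matrixP => i j; rewrite (ord1 j) -(inord_val i).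
by case: i => [[|[|[|[|//]]]] ?].
Qed.

Lemma col6P x y :
  x (inord 0) 0 = y (inord 0) 0 -> x (inord 1) 0 = y (inord 1) 0 ->
  x (inord 2) 0 = y (inord 2) 0 -> x (inord 3) 0 = y (inord 3) 0 ->
  x (inord 4) 0 = y (inord 4) 0 -> x (inord 5) 0 = y (inord 5) 0 -> x = y.
Proof.
move=> e0 e1 e2 e3 e4 e5; apply/matrixP => i j; rewrite (ord1 j) -(inord_val i).
by case: i => [[|[|[|[|[|[|//]]]]]] ?].
Qed.

Lemma wedgeE0 v w : wedge v w (inord 0) 0 = v (inord 0) 0 * w (inord 1) 0 - v (inord 1) 0 * w (inord 0) 0.
Proof. by rewrite mxE /pr /= ?inordK. Qed.
Lemma wedgeE1 v w : wedge v w (inord 1) 0 = v (inord 0) 0 * w (inord 2) 0 - v (inord 2) 0 * w (inord 0) 0.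
Proof. by rewrite mxE /pr /= ?inordK. Qed.
Lemma wedgeE2 v w : wedge v w (inord 2) 0 = v (inord 0) 0 * w (inord 3) 0 - v (inord 3) 0 * w (inord 0) 0.
Proof. by rewrite mxE /pr /= ?inordK. Qed.
Lemma wedgeE3 v w : wedge v w (inord 3) 0 = v (inord 1) 0 * w (inord 2) 0 - v (inord 2) 0 * w (inord 1) 0.
Proof. by rewrite mxE /pr /= ?inordK. Qed.
Lemma wedgeE4 v w : wedge v w (inord 4) 0 = v (inord 1) 0 * w (inord 3) 0 - v (inord 3) 0 * w (inord 1) 0.
Proof. by rewrite mxE /pr /= ?inordK. Qed.
Lemma wedgeE5 v w : wedge v w (inord 5) 0 = v (inord 2) 0 * w (inord 3) 0 - v (inord 3) 0 * w (inord 2) 0.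
Proof. by rewrite mxE /pr /= ?inordK. Qed.

Ltac expand_Mj4 :=
  rewrite mxE !big_ord_recl big_ord0 /Mj !mxE /= ?inordK //=;
  case: ord4_inord => -> -> -> ->; ring.

Lemma JvecE0 v : Jvec v (inord 0) 0 = - (v (inord 1) 0)^*.  Proof. by expand_Mj4. Qed.
Lemma JvecE1 v : Jvec v (inord 1) 0 = (v (inord 0) 0)^*.    Proof. by expand_Mj4. Qed.
Lemma JvecE2 v : Jvec v (inord 2) 0 = - (v (inord 3) 0)^*.  Proof. by expand_Mj4. Qed.
Lemma JvecE3 v : Jvec v (inord 3) 0 = (v (inord 2) 0)^*.    Proof. by expand_Mj4. Qed.

Ltac expand_Mj6 :=
  rewrite mxE !big_ord_recl big_ord0 /Mj !mxE /pr /= !inordK //=;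
  case: ord6_inord => -> -> -> -> [-> ->]; ring.

Lemma jLE0 x : jL x (inord 0) 0 = (x (inord 0) 0)^*.    Proof. by expand_Mj6. Qed.
Lemma jLE1 x : jL x (inord 1) 0 = (x (inord 4) 0)^*.    Proof. by expand_Mj6. Qed.
Lemma jLE2 x : jL x (inord 2) 0 = - (x (inord 3) 0)^*.  Proof. by expand_Mj6. Qed.
Lemma jLE3 x : jL x (inord 3) 0 = - (x (inord 2) 0)^*.  Proof. by expand_Mj6. Qed.
Lemma jLE4 x : jL x (inord 4) 0 = (x (inord 1) 0)^*.    Proof. by expand_Mj6. Qed.
Lemma jLE5 x : jL x (inord 5) 0 = (x (inord 5) 0)^*.    Proof. by expand_Mj6. Qed.

End Coordinates.

Ltac coords :=
  rewrite /wedge4 ?(mx_addE, mx_oppE, mx_scaleE, mx_zeroE,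
    wedgeE0, wedgeE1, wedgeE2, wedgeE3, wedgeE4, wedgeE5,
    JvecE0, JvecE1, JvecE2, JvecE3, jLE0, jLE1, jLE2, jLE3, jLE4, jLE5);
  rewrite ?(conjCB, conjCD, conjCN, conjCM, conjCK, conjC0, conjC1).
Ltac col4_ext := apply: col4P; coords.
Ltac col6_ext := apply: col6P; coords.

Section Identities.
Variable C : numClosedFieldType.
Implicit Types (u v w : 'cV[C]_4) (x y : 'cV[C]_6).

Lemma JvecD v w : Jvec (v + w) = Jvec v + Jvec w.  Proof. by col4_ext; ring. Qed.
Lemma JvecZ (c : C) v : Jvec (c *: v) = c^* *: Jvec v.  Proof. by col4_ext; ring. Qed.
Lemma JvecK v : Jvec (Jvec v) = - v.  Proof. by col4_ext; ring. Qed.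
Lemma Jvec0 : Jvec 0 = 0 :> 'cV[C]_4.  Proof. by col4_ext; ring. Qed.

Lemma Jvec_eq0 v : (Jvec v == 0) = (v == 0).
Proof.
apply/eqP/eqP => [Jv0|->]; last exact: Jvec0.
by apply/eqP; rewrite -oppr_eq0 -JvecK Jv0 Jvec0.
Qed.

Lemma jLZ (c : C) x : jL (c *: x) = c^* *: jL x.  Proof. by col6_ext; ring. Qed.
Lemma jLK x : jL (jL x) = x.  Proof. by col6_ext; ring. Qed.
Lemma jL0 : jL 0 = 0 :> 'cV[C]_6.  Proof. by col6_ext; ring. Qed.
Lemma jL_wedge v w : jL (wedge v w) = wedge (Jvec v) (Jvec w).  Proof. by col6_ext; ring. Qed.

Lemma wedge0 w : wedge 0 w = 0.  Proof. by col6_ext; ring. Qed.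
Lemma wedgeNr v w : wedge w (- v) = wedge v w.  Proof. by col6_ext; ring. Qed.

Lemma wedge4C x y : wedge4 x y = wedge4 y x.  Proof. by coords; ring. Qed.
Lemma wedge4Zl (c : C) x y : wedge4 (c *: x) y = c * wedge4 x y.  Proof. by coords; ring. Qed.
Lemma wedge4_jL x y : wedge4 (jL x) (jL y) = (wedge4 x y)^*.  Proof. by coords; ring. Qed.
Lemma wedge4_wedge_self v w : wedge4 (wedge v w) (wedge v w) = 0.  Proof. by coords; ring. Qed.

Lemma jL_wedge_Jvec v w : jL (wedge v (Jvec w)) = wedge w (Jvec v).
Proof. by rewrite jL_wedge JvecK wedgeNr. Qed.

Lemma wedge_addZ (v1 v2 w1 w2 : 'cV[C]_4) (s t : C) :
  wedge (v1 + s *: v2) (w1 + t *: w2) =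
  wedge v1 w1 + t *: wedge v1 w2 + s *: wedge v2 w1 + (s * t) *: wedge v2 w2.
Proof. by col6_ext; ring. Qed.

Lemma wedge_comb v w (s t s' t' : C) :
  wedge (s *: v + t *: w) (s' *: w + t' *: v) = (s * s' - t * t') *: wedge v w.
Proof. by col6_ext; ring. Qed.

Lemma wedge4_wedge_spanl (a b w : 'cV[C]_4) (s t : C) :
  wedge4 (wedge (s *: a + t *: b) w) (wedge a b) = 0.
Proof. by coords; ring. Qed.

Lemma wedge4_wedge_spanr (a b v : 'cV[C]_4) (s t : C) :
  wedge4 (wedge v (s *: a + t *: b)) (wedge a b) = 0.
Proof. by coords; ring. Qed.

Lemma wedge4_wedge_coords (a b c d : 'cV[C]_4) (s1 t1 u1 w1 s2 t2 u2 w2 : C) :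
  wedge4 (wedge a b) (wedge (s1 *: a + t1 *: b + u1 *: c + w1 *: d)
                            (s2 *: a + t2 *: b + u2 *: c + w2 *: d))
  = (u1 * w2 - w1 * u2) * wedge4 (wedge a b) (wedge c d).
Proof. by coords; ring. Qed.

Lemma wedge4_expansion (a b c d : 'cV[C]_4) x :
  wedge4 (wedge a b) (wedge c d) *: x =
    wedge4 x (wedge c d) *: wedge a b - wedge4 x (wedge b d) *: wedge a c
  + wedge4 x (wedge b c) *: wedge a d + wedge4 x (wedge a d) *: wedge b c
  - wedge4 x (wedge a c) *: wedge b d + wedge4 x (wedge a b) *: wedge c d.
Proof. by col6_ext; ring. Qed.

Lemma wedge4_self_expansion (a b c d : 'cV[C]_4) x :
  wedge4 (wedge a b) (wedge c d) * wedge4 x x =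
  2 * (wedge4 x (wedge c d) * wedge4 x (wedge a b)
       - wedge4 x (wedge b d) * wedge4 x (wedge a c)
       + wedge4 x (wedge b c) * wedge4 x (wedge a d)).
Proof. by coords; ring. Qed.

Lemma wedge4_nondeg x : (forall v w, wedge4 x (wedge v w) = 0) -> x = 0.
Proof.
move=> hx; pose e k : 'cV[C]_4 := \col_(i < 4) ((i : nat) == k)%:R.
have e_volume : wedge4 (wedge (e 0%N) (e 1%N)) (wedge (e 2%N) (e 3%N)) = 1.
  by coords; rewrite !mxE !inordK //=; ring.
have := wedge4_expansion (e 0%N) (e 1%N) (e 2%N) (e 3%N) x.
by rewrite e_volume scale1r !hx !scale0r !(addr0, subr0).
Qed.

Lemma normsq_add_eq0 (s t : C) : s * s^* + t * t^* = 0 -> s = 0 /\ t = 0.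
Proof.
by move/eqP; rewrite paddr_eq0 ?mul_conjC_ge0 // !mul_conjC_eq0 => /andP[/eqP -> /eqP ->].
Qed.

Lemma wedge_Jvec_eq0 v : (wedge v (Jvec v) == 0) = (v == 0).
Proof.
apply/eqP/eqP => [h|->]; last by rewrite wedge0.
have h0 := congr1 (fun x : 'cV[C]_6 => x (inord 0) 0) h.
have h5 := congr1 (fun x : 'cV[C]_6 => x (inord 5) 0) h.
move: h0 h5; rewrite /= !mx_zeroE wedgeE0 wedgeE5 JvecE0 JvecE1 JvecE2 JvecE3.
rewrite !mulrN !opprK => /normsq_add_eq0[v0 v1] /normsq_add_eq0[v2 v3].
by apply: col4P; rewrite mx_zeroE.
Qed.

Lemma inQ2S_jL (A B x : 'cV[C]_6) : jL A = B -> inQ2S A B x -> inQ2S A B (jL x).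
Proof.
move=> AB [x0 [xx [xA xB]]]; have BA : jL B = A by rewrite -AB jLK.
split; first by apply: contraNneq x0 => jx0; rewrite -[x]jLK jx0 jL0.
split; first by rewrite wedge4_jL xx conjC0.
by split; [rewrite -BA | rewrite -AB]; rewrite wedge4_jL ?xA ?xB conjC0.
Qed.

Lemma wedge4_real x y (c : C) : jL x = c *: x -> (wedge4 x y)^* = c * wedge4 x (jL y).
Proof. by move=> jx; rewrite -wedge4_jL jx wedge4Zl. Qed.

Lemma proj_eq_trans n (x y z : 'cV[C]_n) : proj_eq x y -> proj_eq y z -> proj_eq x z.
Proof.
move=> [c [c0 ->]] [d [d0 ->]]; exists (d * c).
by rewrite mulf_neq0 // scalerA.
Qed.

(* The coefficient matrix [[-q, g], [d, -p]] is singular and, up to the factor c,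
   hermitian. *)
Lemma real_rank_one_wedge (a b : 'cV[C]_4) (p q g d c : C) :
  c != 0 -> g * d = q * p -> q^* = c * q -> g^* = c * d -> d^* = c * g ->
  exists s t k : C,
    (- q) *: wedge a (Jvec a) + g *: wedge a (Jvec b) + d *: wedge b (Jvec a)
    + (- p) *: wedge b (Jvec b) = k *: wedge (s *: a + t *: b) (Jvec (s *: a + t *: b)).
Proof.
move=> c_neq0 gd qc gc dc; have [q0|q_neq0] := eqVneq q 0.
  have [g0 d0] : g = 0 /\ d = 0.
    have /eqP := gd; rewrite q0 mul0r mulf_eq0 => /orP[]/eqP e0.
    - by move: gc; rewrite e0 conjC0 => /esym/eqP; rewrite mulf_eq0 (negbTE c_neq0) => /eqP.
    - by move: dc; rewrite e0 conjC0 => /esym/eqP; rewrite mulf_eq0 (negbTE c_neq0) => /eqP.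
  exists 0, 1, (- p).
  by rewrite q0 g0 d0 oppr0 !scale0r !add0r scale1r.
pose t := - d / q.
have tc : t^* = - g / q by rewrite conjCM conjCN conjCV dc qc; field; rewrite q_neq0 c_neq0.
have p_eq : p = g * d / q by rewrite gd [q * p]mulrC mulfK.
exists 1, t, (- q).
rewrite scale1r JvecD JvecZ wedge_addZ !scalerDr !scalerA.
by congr (_ + _ + _ + _); congr (_ *: _); rewrite ?tc ?p_eq /t; field.
Qed.

End Identities.

Section Twistor.
Variables (C : numClosedFieldType) (T : 'M[C]_4) (a b : 'cV[C]_4).
Hypothesis TJ : forall v, T *m Jvec v = Jvec (T *m v).
Hypothesis TT : T *m T = -1.
Hypothesis Ta : T *m a = 'i *: a.
Hypothesis Tb : T *m b = 'i *: b.
Hypothesis ab0 : wedge a b != 0.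
Hypothesis S_span : forall v, T *m v = 'i *: v -> exists s t : C, v = s *: a + t *: b.

Local Notation Q2S := (inQ2S (wedge a b) (wedge (Jvec a) (Jvec b))).
Implicit Types (u v w : 'cV[C]_4) (x : 'cV[C]_6).

Lemma mulmxTK v : T *m (T *m v) = - v.
Proof. by rewrite mulmxA TT mulNmx mul1mx. Qed.

Lemma Jvec_eigen v (e : C) : T *m v = e *: v -> T *m Jvec v = e^* *: Jvec v.
Proof. by move=> Tv; rewrite TJ Tv JvecZ. Qed.

Lemma proj_i_eigen v : T *m (v - 'i *: (T *m v)) = 'i *: (v - 'i *: (T *m v)).
Proof.
rewrite mulmxBr -scalemxAr mulmxTK scalerN opprK scalerBr scalerA mulCii scaleN1r opprK.
by rewrite addrC.
Qed.

Lemma proj_Ni_eigen v : T *m (v + 'i *: (T *m v)) = - 'i *: (v + 'i *: (T *m v)).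
Proof.
rewrite mulmxDr -scalemxAr mulmxTK scalerN scalerDr scalerA mulNr mulCii opprK scale1r.
by rewrite scaleNr addrC.
Qed.

Lemma span_basis v :
  exists s t s' t' : C, v = s *: a + t *: b + s' *: Jvec a + t' *: Jvec b.
Proof.
have [s [t vp]] := S_span (proj_i_eigen v).
have := Jvec_eigen (proj_Ni_eigen v); rewrite conjCN conjCi opprK => /S_span[s' [t' Jvm]].
have vm : v + 'i *: (T *m v) = - (s'^* *: Jvec a + t'^* *: Jvec b).
  by rewrite -!JvecZ -JvecD -Jvm JvecK opprK.
have two_neq0 : 2 != 0 :> C by rewrite pnatr_eq0.
have -> : v = 2^-1 *: ((v - 'i *: (T *m v)) + (v + 'i *: (T *m v))).
  by rewrite addrACA addNr addr0 -mulr2n -scaler_nat scalerA mulVf // scale1r.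
exists (s / 2), (t / 2), (- s'^* / 2), (- t'^* / 2).
by rewrite vp vm; col4_ext; field.
Qed.

Lemma basis_volume_neq0 : wedge4 (wedge a b) (wedge (Jvec a) (Jvec b)) != 0.
Proof.
apply/eqP => vol0; move/eqP: ab0; apply; apply: wedge4_nondeg => v w.
have [s1 [t1 [u1 [w1 ->]]]] := span_basis v.
have [s2 [t2 [u2 [w2 ->]]]] := span_basis w.
by rewrite wedge4_wedge_coords vol0 mulr0.
Qed.

Lemma twistor_point_real u x :
  u != 0 -> T *m u = 'i *: u -> proj_eq (wedge u (Jvec u)) x -> Q2S x /\ proj_eq x (jL x).
Proof.
move=> u0 Tu [c [c0 ->]]; have [s [t u_st]] := S_span Tu.
split; first do !split.
- by rewrite scaler_eq0 negb_or c0 wedge_Jvec_eq0 u0.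
- by rewrite wedge4Zl wedge4C wedge4Zl wedge4_wedge_self !mulr0.
- by rewrite wedge4Zl u_st wedge4_wedge_spanl mulr0.
- by rewrite wedge4Zl u_st JvecD !JvecZ wedge4_wedge_spanr mulr0.
exists (c^* / c); split; first by rewrite mulf_neq0 ?conjC_eq0 ?invr_eq0.
by rewrite jLZ jL_wedge_Jvec scalerA divfK.
Qed.

Lemma eigen_fixes_hline u : T *m u = 'i *: u -> fixes_hline T u.
Proof.
move=> Tu; have TJu := Jvec_eigen Tu; rewrite conjCi in TJu.
have ii : 'i * 'i = -1 :> C := mulCii C.
have Tcomb s t : T *m (s *: u + t *: Jvec u) = (s * 'i) *: u + (t * - 'i) *: Jvec u.
  by rewrite mulmxDr -!scalemxAr Tu TJu !scalerA.
move=> w; split.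
- case=> [s [t ->]]; exists ((- 'i * s) *: u + ('i * t) *: Jvec u).
  split; first by exists (- 'i * s), ('i * t).
  by rewrite Tcomb; congr (_ *: _ + _ *: _); ring: ii.
- case=> _ [[s [t ->]] ->]; exists (s * 'i), (t * - 'i).
  exact: Tcomb.
Qed.

Lemma fixes_hline_eigen v : v != 0 -> fixes_hline T v ->
  exists u, [/\ u != 0, T *m u = 'i *: u & proj_eq (wedge u (Jvec u)) (wedge v (Jvec v))].
Proof.
move=> v0 hv; have [s [t Tv]] : inH v (T *m v).
  by apply/hv; exists v; split=> //; exists 1, 0; rewrite scale1r scale0r addr0.
set vp := v - 'i *: (T *m v).
have [vp0|vp_neq0] := eqVneq vp 0.
  have TvN : T *m v = - 'i *: v.
    move/eqP: vp0; rewrite subr_eq0 => /eqP vE.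
    by rewrite {2}vE scalerA mulNr mulCii opprK scale1r.
  exists (Jvec v); split; first by rewrite Jvec_eq0.
    by rewrite (Jvec_eigen TvN) conjCN conjCi opprK.
  by exists 1; rewrite oner_neq0 scale1r JvecK wedgeNr.
exists vp; split=> //; first exact: proj_i_eigen.
have vp_st : vp = (1 - 'i * s) *: v + (- ('i * t)) *: Jvec v.
  by rewrite /vp Tv; col4_ext; ring.
move: vp_st; set al := 1 - 'i * s; set be := - ('i * t) => vp_st.
have nsq : al * al^* + be * be^* != 0.
  apply: contraNneq vp_neq0 => /normsq_add_eq0[al0 be0].
  by rewrite vp_st al0 be0 !scale0r addr0.
exists (al * al^* + be * be^*)^-1; rewrite invr_eq0 nsq; split=> //.
rewrite vp_st JvecD !JvecZ JvecK scalerN -scaleNr wedge_comb scalerA.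
by rewrite mulrN opprK mulVf // scale1r.
Qed.

Lemma real_point_twistor x : Q2S x -> proj_eq x (jL x) ->
  exists u, [/\ u != 0, T *m u = 'i *: u & proj_eq (wedge u (Jvec u)) x].
Proof.
move=> [x0 [xx [xS xSj]]] [c [c0 x_real]].
have vol_x := wedge4_expansion a b (Jvec a) (Jvec b) x.
rewrite xS xSj !scale0r add0r addr0 -!scaleNr in vol_x.
have quad := wedge4_self_expansion a b (Jvec a) (Jvec b) x.
rewrite xx xS xSj mulr0 mul0r sub0r addrC in quad.
have re y := wedge4_real y x_real.
have qc := re (wedge b (Jvec b)); have gc := re (wedge b (Jvec a)).
have dc := re (wedge a (Jvec b)); rewrite !jL_wedge_Jvec in qc gc dc.
move: vol_x quad qc gc dc.
set vol := wedge4 (wedge a b) _; set p := wedge4 x (wedge a (Jvec a)).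
set q := wedge4 x (wedge b (Jvec b)); set g := wedge4 x (wedge b (Jvec a)).
set d := wedge4 x (wedge a (Jvec b)) => vol_x quad qc gc dc.
have gd : g * d = q * p.
  by move/esym/eqP: quad; rewrite mulf_eq0 pnatr_eq0 subr_eq0 => /eqP.
have [s [t [k kst]]] := real_rank_one_wedge a b c0 gd qc gc dc.
have vol_neq0 : vol != 0 := basis_volume_neq0.
have volx_neq0 : vol *: x != 0 by rewrite scaler_eq0 negb_or vol_neq0.
exists (s *: a + t *: b); split.
- by apply: contraNneq volx_neq0 => u0; rewrite vol_x kst u0 wedge0 scaler0.
- by rewrite mulmxDr -!scalemxAr Ta Tb scalerDr !scalerA (mulrC s) (mulrC t).
exists (vol^-1 * k); split.
  by rewrite mulf_neq0 ?invr_eq0 //; apply: contraNneq volx_neq0 => k0; rewrite vol_x kst k0 scale0r.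
by rewrite -scalerA -kst -vol_x scalerA mulVf // scale1r.
Qed.
End Twistor.

Theorem mainTheorem18 (C : numClosedFieldType) (T : 'M[C]_4) (a b : 'cV[C]_4) :
  (forall v, T *m Jvec v = Jvec (T *m v)) ->
  T *m T = -1 ->
  T *m a = 'i *: a -> T *m b = 'i *: b -> wedge a b != 0 ->
  (forall v, T *m v = 'i *: v -> exists x y : C, v = x *: a + y *: b) ->
  let Q2 := inQ2S (wedge a b) (wedge (Jvec a) (Jvec b)) in
  (forall al, Q2 al -> Q2 (jL al) /\ jL (jL al) = al) /\
  (forall al, (Q2 al /\ proj_eq al (jL al)) <->
     exists v, v != 0 /\ fixes_hline T v /\ proj_eq (wedge v (Jvec v)) al) /\
  (forall al, (Q2 al /\ proj_eq al (jL al)) <->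
     exists v, v != 0 /\ T *m v = 'i *: v /\ proj_eq (wedge v (Jvec v)) al).
Proof.
move=> TJ TT Ta Tb ab0 S_span Q2.
have real_iff x : Q2 x /\ proj_eq x (jL x) <->
    exists u, u != 0 /\ T *m u = 'i *: u /\ proj_eq (wedge u (Jvec u)) x.
  split=> [[Qx x_real] | [u [u0 [Tu ux]]]]; last exact: (twistor_point_real S_span u0 Tu ux).
  by have [u [u0 Tu ux]] := real_point_twistor TJ TT Ta Tb ab0 S_span Qx x_real; exists u.
split; first by move=> x Qx; rewrite jLK; split=> //; exact: inQ2S_jL (jL_wedge a b) Qx.
split=> // x; rewrite real_iff; split=> [[u [u0 [Tu ux]]] | [v [v0 [hv vx]]]].
  by exists u; split=> //; split=> //; exact: (eigen_fixes_hline TJ Tu).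
have [u [u0 Tu uv]] := fixes_hline_eigen TJ TT v0 hv.
by exists u; split=> //; split=> //; exact: proj_eq_trans uv vx.
Qed.
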